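(* Let $\mathfrak d$ be a delta operator with basic sequence $(p_n(x))_{n\ge0}$, $\mathcal Z$ a grid, and for each $j\in\mathbb N$ let $(t^{(j)}_n(x))_{n\ge0}$ be the generalized Gončarov basis associated with $(\mathfrak d,\mathcal Z^{(j)})$ (so $t_n=t^{(0)}_n$ is the basis for $(\mathfrak d,\mathcal Z)$). Then for all $\xi\in\mathbb K$ and $n\in\mathbb N$, $$t_n(x+\xi)=\sum_{i=0}^n\binom ni t^{(i)}_{n-i}(\xi)\,p_i(x),\qquad\text{in particular}\qquad t_n(x)=\sum_{i=0}^n\binom ni t^{(i)}_{n-i}(0)\,p_i(x).$$
   Context: $\mathbb K$ is a field of characteristic zero; a delta operator is a linear operator $\mathfrak d$ on $\mathbb K[x]$ commuting with all shifts $E_a:f(x)\mapsto f(x+a)$ and with $\mathfrak d(x)$ a nonzero constant; its basic sequence is the unique $(p_n)$ with $\deg p_n=n$, $p_0=1$, $p_n(0)=0$ ($n\ge1$), $\mathfrak dp_n=np_{n-1}$. $\varepsilon_z$ is evaluation at $z$. A grid is a sequence $\mathcal Z=(z_i)_{i\ge0}$ in $\mathbb K$, and $\mathcal Z^{(j)}=(z_{i+j})_{i\ge0}$. The generalized Gončarov basis associated with $(\mathfrak d,\mathcal Z)$ is the unique sequence $(t_n)_{n\ge0}$ with $\deg t_n=n$ and $\varepsilon_{z_i}(\mathfrak d^{\,i}(t_n))=n!\,\delta_{i,n}$ for all $i,n$. *)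

From HB Require Import structures.
From mathcomp Require Import all_boot all_order all_algebra.
Set Implicit Arguments. Unset Strict Implicit. Unset Printing Implicit Defensive.
Import Order.TTheory GRing.Theory Num.Theory.
Local Open Scope ring_scope.

Definition shiftp (K : fieldType) (a : K) (f : {poly K}) : {poly K} :=
  f \Po ('X + a%:P).

Definition is_delta_op (K : fieldType) (d : {poly K} -> {poly K}) : Prop :=
  (forall (c : K) (f g : {poly K}), d (c *: f + g) = c *: d f + d g) /\
  (forall (a : K) (f : {poly K}), d (shiftp a f) = shiftp a (d f)) /\
  (exists c : K, c != 0 /\ d 'X = c%:P).

Definition is_basic_seq (K : fieldType) (d : {poly K} -> {poly K})
  (p : nat -> {poly K}) : Prop :=
  (forall n, size (p n) = n.+1) /\
  p 0%N = 1 /\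
  (forall n, (p n.+1).[0] = 0) /\
  (forall n, d (p n.+1) = n.+1%:R *: p n).

Definition is_goncarov_basis (K : fieldType) (d : {poly K} -> {poly K})
  (z : nat -> K) (t : nat -> {poly K}) : Prop :=
  (forall n, size (t n) = n.+1) /\
  (forall i n, (iter i d (t n)).[z i] = if i == n then (n`!)%:R else 0).

(* The polynomials d^i t_n and (n)_i t^(i)_(n-i) both have degree at most
   n - i and satisfy the same Gončarov interpolation conditions on the grid
   z^(i), so they coincide: an interpolation problem for a delta operator has
   at most one solution because d lowers degrees by exactly one.  Expanding
   t_n(x + xi) in the basic sequence by the umbral Taylor formula
   f = sum_i (d^i f)(0) / i! p_i, and using that d commutes with the shift
   by xi, the i-th coefficient is (d^i t_n)(xi) / i! = C(n, i) t^(i)_(n-i)(xi). *)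
From HB Require Import structures.
From mathcomp Require Import all_boot all_order all_algebra.
From mathcomp Require Import zify.
Import Order.TTheory GRing.Theory Num.Theory.
Local Open Scope ring_scope.
Set Implicit Arguments. Unset Strict Implicit.

Lemma horner0_shiftp (K : fieldType) (a : K) (f : {poly K}) :
  (shiftp a f).[0] = f.[a].
Proof. by rewrite /shiftp horner_comp !hornerE. Qed.

Lemma size_shiftp (K : fieldType) (a : K) (f : {poly K}) :
  size (shiftp a f) = size f.
Proof. by rewrite /shiftp size_comp_poly2 // size_XaddC. Qed.

Lemma shiftp0 (K : fieldType) (f : {poly K}) : shiftp 0 f = f.
Proof. by rewrite /shiftp polyC0 addr0 comp_polyXr. Qed.

Section DeltaOperator.

Variable K : fieldType.
Hypothesis Kchar0 : [pchar K] =i pred0.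
Variable d : {poly K} -> {poly K}.
Hypothesis delta_linear :
  forall (c : K) (f g : {poly K}), d (c *: f + g) = c *: d f + d g.
Hypothesis delta_shiftp :
  forall (a : K) (f : {poly K}), d (shiftp a f) = shiftp a (d f).
Variable cX : K.
Hypothesis deltaX : d 'X = cX%:P.

Lemma natf_fact_neq0 m : (m`!)%:R != 0 :> K.
Proof. by rewrite ((pcharf0P K).1 Kchar0) -lt0n fact_gt0. Qed.

Lemma deltaD f g : d (f + g) = d f + d g.
Proof. by have := delta_linear 1 f g; rewrite !scale1r. Qed.

Lemma delta0 : d 0 = 0.
Proof. by apply: (addrI (d 0)); rewrite -deltaD !addr0. Qed.

Lemma deltaZ c f : d (c *: f) = c *: d f.
Proof. by have := delta_linear c f 0; rewrite !addr0 delta0 addr0. Qed.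

Lemma deltaN f : d (- f) = - d f.
Proof. by apply: (addrI (d f)); rewrite -deltaD !subrr delta0. Qed.

(* Shifting 'X by 1 gives d ('X + 1) = d 'X, so d kills the constant 1. *)
Lemma delta1 : d 1 = 0.
Proof.
have := delta_shiftp 1 'X.
rewrite /shiftp comp_polyX deltaX comp_polyC deltaD deltaX polyC1.
by move/(canRL (addKr _)); rewrite addNr.
Qed.

Lemma iter_deltaD k f g : iter k d (f + g) = iter k d f + iter k d g.
Proof. by elim: k => //= k ->; rewrite deltaD. Qed.

Lemma iter_delta0 k : iter k d 0 = 0.
Proof. by elim: k => //= k ->; rewrite delta0. Qed.

Lemma iter_deltaZ k c f : iter k d (c *: f) = c *: iter k d f.
Proof. by elim: k => //= k ->; rewrite deltaZ. Qed.

Lemma iter_deltaB k f g : iter k d (f - g) = iter k d f - iter k d g.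
Proof.
rewrite iter_deltaD; congr (_ + _).
by elim: k => //= k ->; rewrite deltaN.
Qed.

Lemma iter_delta_sum k n (F : 'I_n -> {poly K}) :
  iter k d (\sum_(i < n) F i) = \sum_(i < n) iter k d (F i).
Proof. exact: (big_morph (iter k d) (iter_deltaD k) (iter_delta0 k)). Qed.

Lemma iter_delta_shiftp k a f : iter k d (shiftp a f) = shiftp a (iter k d f).
Proof. by elim: k => //= k ->; rewrite delta_shiftp. Qed.

Variable p : nat -> {poly K}.
Hypothesis size_basic : forall n, size (p n) = n.+1.
Hypothesis basic0 : p 0%N = 1.
Hypothesis horner0_basic : forall n, (p n.+1).[0] = 0.
Hypothesis delta_basic : forall n, d (p n.+1) = n.+1%:R *: p n.

Lemma iter_delta_basic k i : iter k d (p i) = (i ^_ k)%:R *: p (i - k).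
Proof.
elim: k => [|k IH] /=; first by rewrite ffactn0 subn0 scale1r.
rewrite IH deltaZ ffactnSr; case: (ltnP k i) => [ltki|leik].
  by rewrite -[(i - k)%N]prednK ?subn_gt0 // delta_basic scalerA -natrM subnS.
by rewrite (eqP (leik : (i - k)%N == 0%N)) basic0 delta1 muln0 !scale0r scaler0.
Qed.

Lemma horner0_iter_delta_basic k i :
  (iter k d (p i)).[0] = if i == k then (k`!)%:R else 0.
Proof.
rewrite iter_delta_basic hornerZ; case: (ltngtP i k) => [ltik|ltki|->].
- by rewrite ffact_small // mul0r.
- by rewrite -[(i - k)%N]prednK ?subn_gt0 // horner0_basic mulr0.
- by rewrite subnn basic0 hornerC mulr1 ffactnn.
Qed.

Lemma basic_span n (f : {poly K}) : (size f <= n.+1)%N ->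
  exists a : nat -> K, f = \sum_(i < n.+1) a i *: p i.
Proof.
elim: n f => [|n IH] f size_f.
  by exists (fun=> f`_0); rewrite big_ord1 basic0 alg_polyC; exact: size1_polyC.
have lead_neq0 : lead_coef (p n.+1) != 0.
  by rewrite lead_coef_eq0 -size_poly_eq0 size_basic.
set c := f`_n.+1 / lead_coef (p n.+1).
have /IH [a def_f] : (size (f - c *: p n.+1)%R <= n.+1)%N.
  apply/leq_sizeP => j; rewrite leq_eqVlt => /orP[/eqP<-|ltj].
    have coef_lead : (p n.+1)`_n.+1 = lead_coef (p n.+1).
      by rewrite /lead_coef size_basic.
    by rewrite coefB coefZ coef_lead divfK // subrr.
  have /leq_sizeP coef_basic : (size (p n.+1) <= n.+2)%N by rewrite size_basic.
  by rewrite coefB coefZ coef_basic // mulr0 subr0 (leq_sizeP _ _ size_f).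
exists (fun i => if i == n.+1 then c else a i).
rewrite big_ord_recr /= eqxx -[f](subrK (c *: p n.+1)) def_f.
congr (_ + _); apply: eq_bigr => i _.
by rewrite ifN // neq_ltn ltn_ord.
Qed.

Lemma basic_taylor n (f : {poly K}) : (size f <= n.+1)%N ->
  f = \sum_(i < n.+1) ((iter i d f).[0] / (i`!)%:R) *: p i.
Proof.
case/basic_span=> a ->; apply: eq_bigr => i _; congr (_ *: _).
rewrite iter_delta_sum horner_sum (bigD1 i) //= big1 => [|j neq_ji].
  rewrite iter_deltaZ hornerZ horner0_iter_delta_basic eqxx addr0.
  by rewrite mulfK ?natf_fact_neq0.
by rewrite iter_deltaZ hornerZ horner0_iter_delta_basic ifN ?mulr0.
Qed.

Lemma size_delta_le k (f : {poly K}) : (size f <= k.+1)%N -> (size (d f) <= k)%N.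
Proof.
move/basic_taylor=> ->; rewrite (iter_delta_sum 1 _ : d _ = _).
apply: leq_trans (size_sum _ _ _) _; apply/bigmax_leqP => -[[|i] lt_in] _ /=.
  by rewrite deltaZ basic0 delta1 scaler0 size_poly0.
rewrite deltaZ delta_basic scalerA (leq_trans (size_scale_leq _ _)) //.
by rewrite size_basic.
Qed.

Lemma size_iter_delta_le i n (f : {poly K}) :
  (size f <= n.+1)%N -> (size (iter i d f) <= (n - i).+1)%N.
Proof.
move=> size_f; elim: i => [|i IH] /=; first by rewrite subn0.
by apply: leq_trans (size_delta_le IH) _; lia.
Qed.

Lemma delta_eq0_horner_eq0 n (g : {poly K}) x :
  d g = 0 -> (size g <= n.+1)%N -> g.[x] = 0 -> g = 0.
Proof.
move=> dg0 size_g; have g_const : g = (g.[0])%:P.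
  rewrite {1}(basic_taylor size_g) big_ord_recl big1 => [|i _].
    by rewrite /= divr1 basic0 addr0 alg_polyC.
  by rewrite lift0 iterSr dg0 iter_delta0 horner0 mul0r scale0r.
by rewrite g_const hornerC => ->; rewrite polyC0.
Qed.

Lemma goncarov_interpolation_eq0 m (g : {poly K}) (w : nat -> K) :
  (size g <= m.+1)%N -> (forall k, (k <= m)%N -> (iter k d g).[w k] = 0) ->
  g = 0.
Proof.
elim: m g w => [|m IH] g w size_g g_w;
  apply: (delta_eq0_horner_eq0 _ size_g (g_w 0%N _)) => //.
  by apply/eqP; rewrite -size_poly_leq0 size_delta_le.
apply: (IH _ (fun k => w k.+1) (size_delta_le size_g)) => k le_km.
by rewrite -iterSr g_w.
Qed.

Variables (z : nat -> K) (t : nat -> nat -> {poly K}).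
Hypothesis goncarov_t :
  forall j, is_goncarov_basis d (fun i => z (i + j)%N) (t j).

Lemma iter_delta_goncarov n i : (i <= n)%N ->
  iter i d (t 0%N n) = (n ^_ i)%:R *: t i (n - i)%N.
Proof.
move=> le_in; apply/eqP; rewrite -subr_eq0; apply/eqP.
apply: (goncarov_interpolation_eq0 (m := (n - i)%N) (w := fun k => z (k + i)%N)).
  rewrite (leq_trans (size_polyD _ _)) // geq_max size_polyN.
  rewrite size_iter_delta_le ?(goncarov_t 0%N).1 //=.
  by rewrite (leq_trans (size_scale_leq _ _)) // (goncarov_t i).1.
move=> k le_k; rewrite iter_deltaB iter_deltaZ -iterD hornerD hornerN hornerZ.
have := (goncarov_t 0%N).2 (k + i)%N n; rewrite addn0 => ->.
rewrite (goncarov_t i).2; case: (eqVneq k (n - i)%N) => [->|neq_k].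
  by rewrite subnK // eqxx -natrM ffact_fact // subrr.
have neq_kin : (k + i)%N != n by apply: contra neq_k => /eqP <-; rewrite addnK.
by rewrite (negPf neq_kin) mulr0 subrr.
Qed.

Lemma shiftp_goncarov xi n :
  shiftp xi (t 0%N n) =
    \sum_(i < n.+1) ('C(n, i)%:R * (t i (n - i)%N).[xi]) *: p i.
Proof.
have size_t : (size (shiftp xi (t 0%N n)) <= n.+1)%N.
  by rewrite size_shiftp (goncarov_t 0%N).1.
rewrite {1}(basic_taylor size_t); apply: eq_bigr => -[i /= lt_in] _.
rewrite iter_delta_shiftp horner0_shiftp iter_delta_goncarov // hornerZ.
by rewrite -bin_ffact natrM mulrAC mulfK ?natf_fact_neq0.
Qed.

End DeltaOperator.

Theorem mainTheorem9 (K : fieldType) (Kchar0 : [pchar K] =i pred0)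
  (d : {poly K} -> {poly K}) (p : nat -> {poly K}) (z : nat -> K)
  (t : nat -> nat -> {poly K})
  (hd : is_delta_op d) (hp : is_basic_seq d p)
  (ht : forall j : nat, is_goncarov_basis d (fun i => z (i + j)%N) (t j)) :
  (forall (xi : K) (n : nat),
     shiftp xi (t 0%N n) =
       \sum_(i < n.+1) ('C(n, i)%:R * (t i (n - i)%N).[xi]) *: p i) /\
  (forall n : nat,
     t 0%N n = \sum_(i < n.+1) ('C(n, i)%:R * (t i (n - i)%N).[0]) *: p i).
Proof.
case: hd => delta_linear [delta_shiftp [cX [_ deltaX]]].
case: hp => size_basic [basic0 [horner0_basic delta_basic]].
have shift_formula := shiftp_goncarov Kchar0 delta_linear delta_shiftp deltaX
  size_basic basic0 horner0_basic delta_basic ht.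
by split=> // n; rewrite -shift_formula shiftp0.
Qed.
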